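(* Let $\mathcal{A}\subset\mathbb{Z}^2$ be finite with $\Delta_{\mathcal{A}}$ a polygon, and let $f\colon\mathcal{A}\to\mathbb{R}^2$ be compatible. Then for every edge $\delta$ of $\Delta_{\mathcal{A}}$ there exist $\mathbf{d},\mathbf{d}'\in\delta\cap\mathcal{A}$ and $\mathbf{a}\in\mathcal{A}\setminus\delta$ such that $f(\mathbf{d}),f(\mathbf{d}'),f(\mathbf{a})$ are affinely independent.
   Context: Write $\Delta_{\mathcal{A}}$ for the convex hull of $\mathcal{A}$. An affinely independent triple $p_0,p_1,p_2\in\mathbb{R}^2$ has orientation given by the sign of $\det(p_1-p_0,\,p_2-p_0)$; it is positively oriented if this determinant is positive. An assignment $f\colon\mathcal{A}\to\mathbb{R}^2$ is weakly compatible if both of the following hold: <ol> <li>There exist affinely independent $\mathbf{a}_0,\mathbf{a}_1,\mathbf{a}_2\in\mathcal{A}$ such that $f(\mathbf{a}_0),f(\mathbf{a}_1),f(\mathbf{a}_2)$ are affinely independent.</li> <li>For any affinely independent $\mathbf{a}'_0,\mathbf{a}'_1,\mathbf{a}'_2\in\mathcal{A}$ with the same orientation as $\mathbf{a}_0,\mathbf{a}_1,\mathbf{a}_2$: if $f(\mathbf{a}'_0),f(\mathbf{a}'_1),f(\mathbf{a}'_2)$ are affinely independent, then they have the same orientation as $f(\mathbf{a}_0),f(\mathbf{a}_1),f(\mathbf{a}_2)$.</li> </ol> The assignment $f$ is compatible if it is weakly compatible and no two distinct vertices of $\Delta_{\mathcal{A}}$ have the same image under $f$. *)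

From HB Require Import structures.
From mathcomp Require Import all_boot all_order all_algebra.
Set Implicit Arguments. Unset Strict Implicit. Unset Printing Implicit Defensive.
Import Order.TTheory GRing.Theory Num.Theory.
Local Open Scope ring_scope.

Section Planar.
Variable R : realFieldType.

Definition pt (x : int * int) : R * R := (x.1%:~R, x.2%:~R).

(* det(p1 - p0, p2 - p0) *)
Definition orient (p0 p1 p2 : R * R) : R :=
  (p1.1 - p0.1) * (p2.2 - p0.2) - (p1.2 - p0.2) * (p2.1 - p0.1).

Definition aff_indep (p0 p1 p2 : R * R) : bool := orient p0 p1 p2 != 0.

Definition dot (l y : R * R) : R := l.1 * y.1 + l.2 * y.2.

Definition in_hull (A : seq (int * int)) (y : R * R) : Prop :=
  exists w : 'I_(size A) -> R,
    [/\ forall i, 0 <= w i,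
        \sum_(i < size A) w i = 1,
        y.1 = \sum_(i < size A) w i * (pt (nth (0, 0) A i)).1 &
        y.2 = \sum_(i < size A) w i * (pt (nth (0, 0) A i)).2].

Definition is_polygon (A : seq (int * int)) : Prop :=
  exists a0 a1 a2, [/\ a0 \in A, a1 \in A, a2 \in A &
                     aff_indep (pt a0) (pt a1) (pt a2)].

Definition is_vertex (A : seq (int * int)) (v : int * int) : Prop :=
  v \in A /\
  exists (l : R * R) (c : R),
    [/\ forall y, in_hull A y -> dot l y <= c,
        dot l (pt v) = c &
        forall y, in_hull A y -> dot l y = c -> y = pt v].

Definition is_edge (A : seq (int * int)) (delta : R * R -> Prop) : Prop :=
  exists (l : R * R) (c : R),
    [/\ l != (0, 0),
        forall y, in_hull A y -> dot l y <= c,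
        forall y, delta y <-> (in_hull A y /\ dot l y = c) &
        exists y1 y2, [/\ delta y1, delta y2 & y1 <> y2]].

Definition weakly_compatible (A : seq (int * int)) (f : int * int -> R * R) : Prop :=
  exists a0 a1 a2,
    [/\ [/\ a0 \in A, a1 \in A & a2 \in A],
        aff_indep (pt a0) (pt a1) (pt a2),
        aff_indep (f a0) (f a1) (f a2) &
        forall b0 b1 b2, b0 \in A -> b1 \in A -> b2 \in A ->
          aff_indep (pt b0) (pt b1) (pt b2) ->
          Num.sg (orient (pt b0) (pt b1) (pt b2)) = Num.sg (orient (pt a0) (pt a1) (pt a2)) ->
          aff_indep (f b0) (f b1) (f b2) ->
          Num.sg (orient (f b0) (f b1) (f b2)) = Num.sg (orient (f a0) (f a1) (f a2))].

Definition compatible (A : seq (int * int)) (f : int * int -> R * R) : Prop :=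
  weakly_compatible A f /\
  forall v w, is_vertex A v -> is_vertex A w -> v <> w -> f v <> f w.

End Planar.

From Stdlib Require Import Classical.
From HB Require Import structures.
From mathcomp Require Import all_boot all_order all_algebra.
From mathcomp Require Import ring lra.
Import Order.TTheory GRing.Theory Num.Theory.
Set Implicit Arguments. Unset Strict Implicit. Unset Printing Implicit Defensive.
Local Open Scope ring_scope.

(* Let the edge delta be cut out of Delta_A by the supporting line dot l = c.
   Among the points of A on that line, those extremal in the direction
   perp l (orthogonal to l) are vertices of Delta_A: a small tilt of the
   supporting functional isolates each of them.  Since delta contains two
   distinct points, these two extremal points v, w are distinct, so
   compatibility gives f v <> f w.  Some point b of A lies off the line,
   because A contains an affinely independent triple.  If no triple
   f d, f d', f a with d, d' on the edge and a off it were independent, every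
   f x would lie on the line through f v and f w (for x on the edge, pivot
   through f b); but then f maps all of A to a line, contradicting weak
   compatibility. *)

Section Planar.
Variable R : realFieldType.
Implicit Types p q r x y z l m : R * R.

Lemma pair_ext p q : p.1 = q.1 -> p.2 = q.2 -> p = q.
Proof. by case: p q => ? ? [? ?] /= -> ->. Qed.

Lemma pair_neq p q : p <> q -> p.1 != q.1 \/ p.2 != q.2.
Proof. by case: p q => ? ? [? ?] /eqP; rewrite xpair_eqE negb_and => /orP. Qed.

Lemma orient_swap p q r : orient p q r = - orient q p r.
Proof. by rewrite /orient; ring. Qed.

Lemma orient_rot p q r : orient p q r = orient q r p.
Proof. by rewrite /orient; ring. Qed.

Lemma collinear_line p q x y z : p <> q ->
  orient p q x = 0 -> orient p q y = 0 -> orient p q z = 0 -> orient x y z = 0.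
Proof.
move=> pq.
pose D x y := (x.1 - p.1) * (y.2 - p.2) - (x.2 - p.2) * (y.1 - p.1).
have D0 x' y' : orient p q x' = 0 -> orient p q y' = 0 -> D x' y' = 0.
  move=> hx hy.
  have e1 : D x' y' * (q.1 - p.1) = orient p q y' * (x'.1 - p.1) - orient p q x' * (y'.1 - p.1)
    by rewrite /D /orient; ring.
  have e2 : D x' y' * (q.2 - p.2) = orient p q y' * (x'.2 - p.2) - orient p q x' * (y'.2 - p.2)
    by rewrite /D /orient; ring.
  rewrite hx hy !mul0r subrr in e1 e2.
  case: (pair_neq pq) => [qp|qp].
  - have /negbTE qp0 : q.1 - p.1 != 0 by rewrite subr_eq0 eq_sym.
    by move/eqP: e1; rewrite mulf_eq0 qp0 orbF => /eqP.
  - have /negbTE qp0 : q.2 - p.2 != 0 by rewrite subr_eq0 eq_sym.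
    by move/eqP: e2; rewrite mulf_eq0 qp0 orbF => /eqP.
move=> hx hy hz.
have -> : orient x y z = D y z + D x y - D x z by rewrite /D /orient; ring.
by rewrite (D0 _ _ hy hz) (D0 _ _ hx hy) (D0 _ _ hx hz) addr0 subrr.
Qed.

(* If b lies on the line pq and x is collinear both with p, b and with q, b,
   then x lies on the line pq (pivot through whichever of p, q differs from b). *)
Lemma collinear_pivot p q b x : p <> q ->
  orient p q b = 0 -> orient x p b = 0 -> orient x q b = 0 -> orient p q x = 0.
Proof.
move=> pq hb hxp hxq; have [bp|bp] := eqVneq b p.
  by rewrite bp in hxq; rewrite orient_swap -(orient_rot x) hxq oppr0.
apply: (@collinear_line p b) => //; first by move=> E; rewrite E eqxx in bp.
- by rewrite /orient; ring.
- by rewrite orient_swap orient_rot hb oppr0.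
- by rewrite -orient_rot.
Qed.

Lemma line_collinear l c p q r : l != (0, 0) ->
  dot l p = c -> dot l q = c -> dot l r = c -> orient p q r = 0.
Proof.
move=> l0 hp hq hr.
have e1 : l.1 * orient p q r = (dot l q - dot l p) * (r.2 - p.2) - (dot l r - dot l p) * (q.2 - p.2)
  by rewrite /dot /orient; ring.
have e2 : l.2 * orient p q r = (dot l r - dot l p) * (q.1 - p.1) - (dot l q - dot l p) * (r.1 - p.1)
  by rewrite /dot /orient; ring.
rewrite hp hq hr subrr !mul0r subrr in e1 e2.
have /pair_neq[/= l1|/= l2] : l <> (0, 0) by move=> E; rewrite E eqxx in l0.
- by move/eqP: e1; rewrite mulf_eq0 (negbTE l1) => /eqP.
- by move/eqP: e2; rewrite mulf_eq0 (negbTE l2) => /eqP.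
Qed.

Definition perp l : R * R := (- l.2, l.1).

Lemma dot_perp_inj l y p : l != (0, 0) ->
  dot l y = dot l p -> dot (perp l) y = dot (perp l) p -> y = p.
Proof.
move=> l0 h1 h2.
have nz : l.1 ^+ 2 + l.2 ^+ 2 != 0.
  rewrite paddr_eq0 ?sqr_ge0 // !sqrf_eq0; apply: contra l0 => /andP[/eqP a /eqP b].
  by apply/eqP/pair_ext.
have e1 : (l.1 ^+ 2 + l.2 ^+ 2) * (y.1 - p.1) =
    l.1 * (dot l y - dot l p) - l.2 * (dot (perp l) y - dot (perp l) p)
  by rewrite /dot /=; ring.
have e2 : (l.1 ^+ 2 + l.2 ^+ 2) * (y.2 - p.2) =
    l.2 * (dot l y - dot l p) + l.1 * (dot (perp l) y - dot (perp l) p)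
  by rewrite /dot /=; ring.
rewrite h1 h2 !(subrr, mulr0, addr0) in e1 e2.
move/eqP: e1; rewrite mulf_eq0 (negbTE nz) subr_eq0 => /eqP E1.
move/eqP: e2; rewrite mulf_eq0 (negbTE nz) subr_eq0 => /eqP E2.
exact: pair_ext.
Qed.

(* Every point of A lies in its convex hull (weight 1 on its first index). *)
Lemma hull_pt (A : seq (int * int)) a : a \in A -> in_hull A (pt R a).
Proof.
move=> aA; set j := Ordinal (etrans (index_mem a A) aA).
have pick (F : 'I_(size A) -> R) :
    \sum_(i < size A) ((i : nat) == index a A)%:R * F i = F j.
  rewrite (bigD1 j) //= eqxx mul1r big1 ?addr0 // => i ij.
  suff /negbTE -> : (i : nat) != index a A by rewrite mul0r.
  by apply: contra ij => /eqP E; apply/eqP/val_inj.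
exists (fun i : 'I_(size A) => ((i : nat) == index a A)%:R); split.
- by move=> i; rewrite ler0n.
- by rewrite -[RHS](pick (fun _ => 1)); apply: eq_bigr => i _; rewrite mulr1.
- by rewrite pick /= nth_index.
- by rewrite pick /= nth_index.
Qed.

Lemma hull_dot (A : seq (int * int)) (w : 'I_(size A) -> R) y l :
  y.1 = \sum_(i < size A) w i * (pt R (nth (0, 0) A i)).1 ->
  y.2 = \sum_(i < size A) w i * (pt R (nth (0, 0) A i)).2 ->
  dot l y = \sum_(i < size A) w i * dot l (pt R (nth (0, 0) A i)).
Proof.
move=> e1 e2; rewrite /dot e1 e2 !mulr_sumr -big_split /=.
by apply: eq_bigr => i _; rewrite /dot; ring.
Qed.

Lemma hull_le (A : seq (int * int)) l c y :
  (forall a, a \in A -> dot l (pt R a) <= c) -> in_hull A y -> dot l y <= c.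
Proof.
move=> hb [w [w0 w1 e1 e2]]; rewrite (hull_dot l e1 e2).
apply: le_trans (_ : \sum_(i < size A) w i * c <= c).
  by apply: ler_sum => i _; apply: (ler_wpM2l (w0 i)); apply/hb/mem_nth.
by rewrite -mulr_suml w1 mul1r.
Qed.

(* If all points of A attaining the bound c of dot l coincide with p, then
   so does every hull point attaining it: the face of the hull cut out by
   the line is the hull of the points of A on the line. *)
Lemma hull_face_unique (A : seq (int * int)) y l c p :
  in_hull A y -> (forall a, a \in A -> dot l (pt R a) <= c) -> dot l y = c ->
  (forall a, a \in A -> dot l (pt R a) = c -> pt R a = p) -> y = p.
Proof.
move=> [w [w0 w1 e1 e2]] hb hy hu.
pose a_ (i : 'I_(size A)) := nth (0, 0) A i.
have slack : \sum_(i < size A) w i * (c - dot l (pt R (a_ i))) = 0.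
  rewrite (eq_bigr (fun i => w i * c - w i * dot l (pt R (a_ i)))); last first.
    by move=> i _; rewrite mulrBr.
  by rewrite sumrB -mulr_suml w1 mul1r -hy (hull_dot l e1 e2) subrr.
have support i : w i = 0 \/ pt R (a_ i) = p.
  have [->|wn] := eqVneq (w i) 0; first by left.
  right; apply: hu; first exact: mem_nth.
  have : w i * (c - dot l (pt R (a_ i))) = 0.
    apply: (psumr_eq0P _ slack) => // j _.
    by apply: mulr_ge0 (w0 j) _; rewrite subr_ge0; apply/hb/mem_nth.
  by move/eqP; rewrite mulf_eq0 (negbTE wn) /= subr_eq0 => /eqP <-.
have comb (F : R * R -> R) : \sum_(i < size A) w i * F (pt R (a_ i)) = F p.
  rewrite (eq_bigr (fun i => w i * F p)); first by rewrite -mulr_suml w1 mul1r.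
  by move=> i _; case: (support i) => ->; rewrite ?mul0r.
by apply: pair_ext; [rewrite e1 (comb fst) | rewrite e2 (comb snd)].
Qed.

Lemma support_vertex (A : seq (int * int)) v l c :
  v \in A -> dot l (pt R v) = c -> (forall a, a \in A -> dot l (pt R a) <= c) ->
  (forall a, a \in A -> dot l (pt R a) = c -> pt R a = pt R v) -> is_vertex R A v.
Proof.
move=> vA hv hb hu; split => //; exists l, c; split => //.
- by move=> y; apply: hull_le.
- by move=> y hy hyc; apply: hull_face_unique hy hb hyc hu.
Qed.

(* A point of A on the face {dot l = c} that uniquely maximizes dot m along
   the face is a vertex: tilting l to K l + m with K large makes it the
   unique maximizer over all of A. *)
Lemma face_extreme_vertex (A : seq (int * int)) v l m c :
  v \in A -> dot l (pt R v) = c -> (forall a, a \in A -> dot l (pt R a) <= c) ->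
  (forall a, a \in A -> dot l (pt R a) = c -> dot m (pt R a) <= dot m (pt R v)) ->
  (forall a, a \in A -> dot l (pt R a) = c -> dot m (pt R a) = dot m (pt R v) ->
     pt R a = pt R v) -> is_vertex R A v.
Proof.
move=> vA hv hb hm hu.
pose ratio a := `|dot m (pt R a) - dot m (pt R v)| / (c - dot l (pt R a)).
pose K := 1 + \big[Num.max/0]_(a <- A | dot l (pt R a) < c) ratio a.
pose l' := (K * l.1 + m.1, K * l.2 + m.2).
have dl' p : dot l' p = K * dot l p + dot m p by rewrite /dot /=; ring.
have below a : a \in A -> dot l (pt R a) < c -> dot l' (pt R a) < K * c + dot m (pt R v).
  move=> aA h; have pos : 0 < c - dot l (pt R a) by rewrite subr_gt0.
  have : ratio a < K.
    rewrite /K ltr_pwDl //.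
    exact: le_bigmax_seq.
  rewrite -(ltr_pM2r pos) /ratio divfK ?gt_eqF // dl' mulrBr => H.
  have := ler_norm (dot m (pt R a) - dot m (pt R v)); lra.
apply: (@support_vertex A v l' (K * c + dot m (pt R v))) => //.
- by rewrite dl' hv.
- move=> a aA; have [h|h] := ltP (dot l (pt R a)) c; first exact/ltW/below.
  have ha : dot l (pt R a) = c by apply/le_anti; rewrite h hb.
  by rewrite dl' ha lerD2l hm.
- move=> a aA E; have [h|h] := ltP (dot l (pt R a)) c.
    by have := below a aA h; rewrite E ltxx.
  have ha : dot l (pt R a) = c by apply/le_anti; rewrite h hb.
  by apply: hu => //; move: E; rewrite dl' ha => /addrI.
Qed.

Lemma seq_argmax (T : eqType) d (O : orderType d) (F : T -> O) (s : seq T) :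
  s != [::] -> exists2 v, v \in s & forall a, a \in s -> (F a <= F v)%O.
Proof.
elim: s => // a s IH _; have [->|sn] := eqVneq s [::].
  by exists a; rewrite ?mem_seq1 // => b; rewrite mem_seq1 => /eqP ->.
have [v vs hv] := IH sn; have [h|h] := leP (F a) (F v).
  exists v; first by rewrite in_cons vs orbT.
  by move=> b; rewrite in_cons => /orP[/eqP ->|/hv].
exists a; first by rewrite in_cons eqxx.
by move=> b; rewrite in_cons => /orP[/eqP ->|/hv /le_trans/(_ (ltW h))].
Qed.

Lemma face_argmax (A : seq (int * int)) l c m y :
  (forall a, a \in A -> dot l (pt R a) <= c) -> in_hull A y -> dot l y = c ->
  exists v, [/\ v \in A, dot l (pt R v) = c &
    forall a, a \in A -> dot l (pt R a) = c -> dot m (pt R a) <= dot m (pt R v)].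
Proof.
move=> hb hy hyc; pose S := [seq a <- A | dot l (pt R a) == c].
have memS a : (a \in S) = (a \in A) && (dot l (pt R a) == c).
  by rewrite mem_filter andbC.
have : S != [::].
  apply/eqP => S0; have y_any p : y = p.
    apply: (hull_face_unique hy hb hyc) => a aA ha.
    suff : a \in S by rewrite S0.
    by rewrite memS aA ha eqxx.
  have /= := congr1 fst (y_any (y.1 + 1, y.2)); lra.
case/(seq_argmax (fun a => dot m (pt R a))) => v; rewrite memS => /andP[vA /eqP vl] hv.
by exists v; split => // a aA ha; apply: hv; rewrite memS aA ha eqxx.
Qed.

(* An edge of Delta_A, cut out by the supporting line dot l = c, contains two
   distinct vertices of Delta_A: the points of A on the line that are extremal
   in the direction perp l. *)
Lemma edge_two_vertices (A : seq (int * int)) l c y1 y2 : l != (0, 0) ->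
  (forall a, a \in A -> dot l (pt R a) <= c) ->
  in_hull A y1 -> dot l y1 = c -> in_hull A y2 -> dot l y2 = c -> y1 <> y2 ->
  exists v w, [/\ v \in A, w \in A, dot l (pt R v) = c & dot l (pt R w) = c] /\
              [/\ is_vertex R A v, is_vertex R A w & v <> w].
Proof.
move=> l0 hb h1 h1c h2 h2c y12.
pose m' : R * R := (l.2, - l.1).
have dm' p : dot m' p = - dot (perp l) p by rewrite /dot /=; ring.
have [v [vA vc hv]] := face_argmax (perp l) hb h1 h1c.
have [w [wA wc hw]] := face_argmax m' hb h1 h1c.
have hw' a : a \in A -> dot l (pt R a) = c -> dot (perp l) (pt R w) <= dot (perp l) (pt R a).
  by move=> aA ha; rewrite -lerN2 -!dm' hw.
have on_face a b : dot l (pt R a) = c -> dot l (pt R b) = c ->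
    dot (perp l) (pt R a) = dot (perp l) (pt R b) -> pt R a = pt R b.
  by move=> ha hb'; apply: dot_perp_inj; rewrite // ha hb'.
exists v, w; split=> //; split.
- apply: (face_extreme_vertex vA vc hb hv) => a aA ha; exact: on_face.
- apply: (face_extreme_vertex (m := m') wA wc hb hw) => a aA ha.
  by rewrite !dm' => /oppr_inj; apply: on_face.
- move=> vw; apply: y12; subst w.
  have face_v a : a \in A -> dot l (pt R a) = c -> pt R a = pt R v.
    by move=> aA ha; apply: on_face => //; apply/le_anti; rewrite hv ?hw'.
  by rewrite (hull_face_unique h1 hb h1c face_v) (hull_face_unique h2 hb h2c face_v).
Qed.

(* An affinely independent triple of A cannot lie on a line, so some point of
   A lies off any given line. *)
Lemma off_line_point (A : seq (int * int)) l c a0 a1 a2 : l != (0, 0) ->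
  a0 \in A -> a1 \in A -> a2 \in A -> aff_indep (pt R a0) (pt R a1) (pt R a2) ->
  exists2 b, b \in A & dot l (pt R b) != c.
Proof.
move=> l0 a0A a1A a2A ind.
have [h0|] := eqVneq (dot l (pt R a0)) c; last by exists a0.
have [h1|] := eqVneq (dot l (pt R a1)) c; last by exists a1.
have [h2|] := eqVneq (dot l (pt R a2)) c; last by exists a2.
by move: ind; rewrite /aff_indep (line_collinear l0 h0 h1 h2) eqxx.
Qed.

Lemma collinear_images (A : seq (int * int)) (f : int * int -> R * R)
    (E : pred (int * int)) v w b :
  v \in A -> w \in A -> b \in A -> E v -> E w -> ~~ E b -> f v <> f w ->
  (forall d d' a, d \in A -> d' \in A -> a \in A -> E d -> E d' -> ~~ E a ->
     orient (f d) (f d') (f a) = 0) ->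
  forall a, a \in A -> orient (f v) (f w) (f a) = 0.
Proof.
move=> vA wA bA Ev Ew Eb fvw degenerate a aA.
have [Ea|Ea] := boolP (E a); last exact: degenerate.
by apply: (@collinear_pivot _ _ (f b)); rewrite // degenerate.
Qed.

End Planar.

Theorem mainTheorem3 (R : realFieldType) (A : seq (int * int))
    (f : int * int -> R * R) :
  is_polygon R A -> compatible A f ->
  forall delta : R * R -> Prop, is_edge A delta ->
  exists d d' a : int * int,
    [/\ [/\ d \in A, d' \in A & a \in A],
        delta (pt R d), delta (pt R d'), ~ delta (pt R a) &
        aff_indep (f d) (f d') (f a)].
Proof.
move=> _ [[a0 [a1 [a2 [[a0A a1A a2A] ind0 indf0 _]]]] f_vertex_inj] delta
  [l [c [l0 hull_bd delta_face [y1 [y2 [d1 d2 y12]]]]]].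
have hb a : a \in A -> dot l (pt R a) <= c by move/hull_pt/hull_bd.
have on_edge a : a \in A -> delta (pt R a) <-> dot l (pt R a) = c.
  by move=> aA; rewrite delta_face; split=> [[]|] //; split=> //; apply: hull_pt.
have [[y1h y1c] [y2h y2c]] := (proj1 (delta_face y1) d1, proj1 (delta_face y2) d2).
have [v [w [[vA wA vc wc] [Vv Vw vw]]]] := edge_two_vertices l0 hb y1h y1c y2h y2c y12.
have [b bA bc] := off_line_point c l0 a0A a1A a2A ind0.
apply: NNPP => no_triple.
pose E : pred (int * int) := fun a => dot l (pt R a) == c.
have degenerate d d' a : d \in A -> d' \in A -> a \in A -> E d -> E d' -> ~~ E a ->
    orient (f d) (f d') (f a) = 0.
  move=> dA d'A aA /eqP dc /eqP d'c ac.
  have [//|indep] := eqVneq (orient (f d) (f d') (f a)) 0; case: no_triple.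
  exists d, d', a; split; rewrite ?on_edge //.
  by move=> ac'; rewrite /E ac' eqxx in ac.
have fvw := f_vertex_inj v w Vv Vw vw.
have on_fvw := collinear_images vA wA bA (introT eqP vc : E v) (introT eqP wc : E w) bc fvw degenerate.
move: indf0; rewrite /aff_indep.
by rewrite (collinear_line fvw (on_fvw _ a0A) (on_fvw _ a1A) (on_fvw _ a2A)) eqxx.
Qed.
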